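(* Let $p$ be a prime and $k$ a positive integer. Let $A,B,K\in\mathbb{Z}[x,y]$ be homogeneous polynomials with $K^r=\gcd(A^3,B^2)$ for some positive integer $r$, let $R=\mathrm{Res}(A^3/K^r,B^2/K^r)$, and let $\nu(k)=\max\{\lceil 12k/r\rceil,v_p(R)\}$. Let $\mathcal{U}=\{(a,b)\in\mathbb{Z}^2:p^{4k}\mid A(a,b),\ p^{6k}\mid B(a,b)\}$. If $(a_1,b_1)\in\mathcal{U}$ and $\gcd(a_1,b_1,p)=1$, then $(a_1+p^{\nu(k)}\mathbb{Z})\times(b_1+p^{\nu(k)}\mathbb{Z})\subseteq\mathcal{U}$.
   Context: $\gcd(F,G)$ denotes the polynomial with integer coefficients of highest possible degree and smallest possible positive leading coefficient (lexicographic ordering) dividing both $F$ and $G$ in $\mathbb{Q}[x,y]$. $\mathrm{Res}$ is the resultant of homogeneous binary forms. *)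

From HB Require Import structures.
From mathcomp Require Import all_boot all_order all_algebra.
From mathcomp Require Import mpoly.
Set Implicit Arguments. Unset Strict Implicit. Unset Printing Implicit Defensive.
Import Order.TTheory GRing.Theory Num.Theory.
Local Open Scope ring_scope.

(* Z[x,y] and Q[x,y]; variable 0 is x, variable 1 is y. *)
Notation zpoly2 := {mpoly int[2]}.
Notation qpoly2 := {mpoly rat[2]}.

Definition toQ (F : zpoly2) : qpoly2 := map_mpoly (fun z : int => z%:~R) F.

Definition qdvd (D F : qpoly2) : Prop := exists Q : qpoly2, F = D * Q.

Definition qcommon (D : qpoly2) (F G : zpoly2) : Prop :=
  qdvd D (toQ F) /\ qdvd D (toQ G).

(* gcd(F,G) = D, following the paper: D has integer coefficients, divides
   F and G in Q[x,y], has the highest possible degree among common divisors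
   in Q[x,y], and, among integer polynomials with these properties, has the
   smallest possible positive leading coefficient (leading coefficient w.r.t.
   the monomial order of the mpoly library). *)
Definition is_gcd (F G D : zpoly2) : Prop :=
  [/\ qcommon (toQ D) F G,
      (forall E : qpoly2, qcommon E F G -> (msize E <= msize D)%N),
      0 < mleadc D &
      (forall E : zpoly2, qcommon (toQ E) F G -> msize E = msize D ->
          0 < mleadc E -> mleadc D <= mleadc E)].

Definition homogeneous (F : zpoly2) : Prop := exists d : nat, F \is d.-homog.

(* degree of a binary form (total degree; 0 for the zero form) *)
Definition fdeg (F : zpoly2) : nat := (msize F).-1.

(* coefficient of x^(d-i) y^i in F *)
Definition fcoef (F : zpoly2) (d i : nat) : int :=
  F@_[multinom (if val t == 0%N then (d - i)%N else i) | t < 2].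

(* Sylvester matrix of binary forms F (degree m) and G (degree n):
   rows 0..n-1 contain the coefficients of F shifted, rows n..n+m-1 those of G. *)
Definition sylvester (F G : zpoly2) (m n : nat) : 'M[int]_(n + m) :=
  \matrix_(i < n + m, j < n + m)
    if (i < n)%N then
      (if (i <= j)%N && (j <= i + m)%N then fcoef F m (j - i) else 0)
    else
      (if (i - n <= j)%N && (j <= i - n + n)%N then fcoef G n (j - (i - n)) else 0).

Definition Res (F G : zpoly2) : int := \det (sylvester F G (fdeg F) (fdeg G)).

Definition ev (F : zpoly2) (a b : int) : int :=
  F.@[fun t : 'I_2 => if val t == 0%N then a else b].

Definition vp (p : nat) (z : int) : nat := logn p `|z|%N.

Definition ceil_div (m r : nat) : nat := ((m + r.-1) %/ r)%N.

Definition inU (p k : nat) (A B : zpoly2) (a b : int) : Prop :=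
  ((p ^ (4 * k))%N%:Z %| ev A a b)%Z /\ ((p ^ (6 * k))%N%:Z %| ev B a b)%Z.

From HB Require Import structures.
From mathcomp Require Import all_boot all_order all_algebra.
From mathcomp Require Import mpoly.
From mathcomp Require Import zify ring.
Set Implicit Arguments. Unset Strict Implicit. Unset Printing Implicit Defensive.
Import Order.TTheory GRing.Theory Num.Theory.
Local Open Scope ring_scope.

(* Write A^3 = K^r F and B^2 = K^r G.  Maximality of the degree of the gcd
   K^r forces F and G to have no non-constant common factor over Q, so their
   Sylvester determinant Res(F,G) is nonzero.  Multiplying the Sylvester
   matrix by the column (a^(N-j) b^j)_j, and then by its adjugate, shows that
   every common divisor of F(a,b) and G(a,b) divides Res(F,G) a^N and
   Res(F,G) b^N, hence Res(F,G) itself when gcd(a,b,p) = 1.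
   Let e = v_p(K(a1,b1)) and c = ceil(12k/r).  If e >= c, then p^c divides
   K(a,b) for every (a,b) = (a1,b1) mod p^nu, so p^(12k) divides K(a,b)^r.
   Otherwise p^(12k-re) divides F(a1,b1) and G(a1,b1), hence Res(F,G), so
   12k - re <= nu and the congruence carries p^e | K and p^(12k-re) | F, G
   over to (a,b).  Either way p^(12k) divides A(a,b)^3 = K(a,b)^r F(a,b) and
   B(a,b)^2 = K(a,b)^r G(a,b), whence p^(4k) | A(a,b) and p^(6k) | B(a,b). *)

(* [bmon d k] is x^(d-k) y^k, so that [fcoef F d k] is [F@_(bmon d k)]. *)
Definition bmon (d k : nat) : 'X_{1..2} :=
  [multinom (if val t == 0%N then (d - k)%N else k) | t < 2].

Lemma bmonE d k (t : 'I_2) : bmon d k t = if val t == 0%N then (d - k)%N else k.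
Proof. by rewrite mnmE. Qed.

Lemma bmonD d e k l : (k <= d)%N -> (l <= e)%N ->
  (bmon d k + bmon e l)%MM = bmon (d + e) (k + l).
Proof. by move=> kd le; apply/mnmP => t; rewrite mnmDE !bmonE; case: ifP; lia. Qed.

Lemma bmon_inj d k l : bmon d k = bmon d l -> k = l.
Proof. by move/mnmP/(_ (@Ordinal 2 1 isT)); rewrite !bmonE. Qed.

Lemma mdeg_bmon d k : (k <= d)%N -> mdeg (bmon d k) = d.
Proof. by move=> kd; rewrite mdegE big_ord_recr big_ord_recr big_ord0 /= !bmonE /=; lia. Qed.

Lemma bmon_mdeg (m : 'X_{1..2}) : m = bmon (mdeg m) (m (@Ordinal 2 1 isT)).
Proof.
have m0 : m (@Ordinal 2 0 isT) = m (widen_ord (leqnSn 1) ord_max) by congr (m _); apply: val_inj.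
have m1 : m (@Ordinal 2 1 isT) = m ord_max by congr (m _); apply: val_inj.
apply/mnmP => t; rewrite bmonE mdegE big_ord_recr big_ord_recr big_ord0 /=.
case: t => [[|[|//]] lt_t2] /=.
  by rewrite -m0 -m1 add0n addnK; congr (m _); apply: val_inj.
by congr (m _); apply: val_inj.
Qed.

Section BinaryForms.
Variable R : comNzRingType.
Implicit Types (p q : {poly R}) (P : {mpoly R[2]}).

Definition bform (d : nat) p : {mpoly R[2]} := \sum_(k < d.+1) p`_k *: 'X_[bmon d k].

Definition dehomog P (d : nat) : {poly R} := \poly_(k < d.+1) P@_(bmon d k).

Lemma bform_is_semilinear d : semilinear (bform d).
Proof.
split=> [a p|p q]; rewrite /bform.
  by rewrite scaler_sumr; apply: eq_bigr => k _; rewrite coefZ scalerA.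
by rewrite -big_split; apply: eq_bigr => k _; rewrite coefD scalerDl.
Qed.
HB.instance Definition _ d := GRing.isSemilinear.Build R {poly R} {mpoly R[2]} _ (bform d)
  (bform_is_semilinear d).

Lemma bformXn d k : (k <= d)%N -> bform d 'X^k = 'X_[bmon d k].
Proof.
move=> kd; rewrite /bform (bigD1 (Ordinal (kd : k < d.+1)%N)) //= coefXn eqxx scale1r.
rewrite big1 ?addr0 // => i /eqP ik; rewrite coefXn.
by case: eqP => [ik'|]; [case: ik; apply: val_inj | rewrite scale0r].
Qed.

Lemma poly_sum_wide p d : (size p <= d)%N -> p = \sum_(k < d) p`_k *: 'X^k.
Proof. by move=> sp; rewrite -poly_def -/(take_poly d p) take_poly_id. Qed.

Lemma scale_mulXn (a b : R) k l : (a *: 'X^k) * (b *: 'X^l) = (a * b) *: 'X^(k + l) :> {poly R}.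
Proof. by rewrite -scalerAl -scalerAr scalerA exprD. Qed.

Lemma bformM d e p q : (size p <= d.+1)%N -> (size q <= e.+1)%N ->
  bform d p * bform e q = bform (d + e) (p * q).
Proof.
move=> sp sq; rewrite [in RHS](poly_sum_wide sp) [in RHS](poly_sum_wide sq).
rewrite [in RHS]mulr_suml linear_sum [bform d p]/bform mulr_suml.
apply: eq_bigr => k _; rewrite [in RHS]mulr_sumr linear_sum [bform e q]/bform mulr_sumr.
apply: eq_bigr => l _.
have [kd le] : (k <= d)%N /\ (l <= e)%N by split; rewrite -ltnS.
rewrite scale_mulXn linearZ /= -scalerAl -scalerAr scalerA.
by rewrite bformXn ?leq_add // -bmonD // mpolyXD.
Qed.

Lemma bform_homog d p : bform d p \is d.-homog.
Proof.
apply: rpred_sum => k _; apply: dhomogZ.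
by rewrite dhomogX; apply/eqP/mdeg_bmon; rewrite -ltnS.
Qed.

Lemma mcoeff_bform d p k : (k <= d)%N -> (bform d p)@_(bmon d k) = p`_k.
Proof.
move=> kd; rewrite raddf_sum (bigD1 (Ordinal (kd : k < d.+1)%N)) //= mcoeffZ mcoeffX eqxx mulr1.
rewrite big1 ?addr0 // => i /eqP ik; rewrite mcoeffZ mcoeffX.
by case: eqP => [/bmon_inj ik'|]; [case: ik; apply: val_inj | rewrite mulr0].
Qed.

Lemma bform_dehomog d P : P \is d.-homog -> bform d (dehomog P d) = P.
Proof.
move=> hP; apply/mpolyP => m; have [md|md] := eqVneq (mdeg m) d; last first.
  by rewrite !(dhomog_nemf_coeff _ md) // bform_homog.
have m1d : (m (@Ordinal 2 1 isT) <= d)%N.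
  by rewrite -md mdegE (bigD1 (@Ordinal 2 1 isT)) //= leq_addr.
by rewrite [m]bmon_mdeg md mcoeff_bform // coef_poly ltnS m1d.
Qed.

Lemma msize_bform d p k : (k <= d)%N -> p`_k != 0 -> (d.+1 <= msize (bform d p))%N.
Proof.
move=> kd pk; have := @msize_mdeg_lt _ _ (bform d p) (bmon d k).
by rewrite mdeg_bmon // mcoeff_msupp mcoeff_bform //; apply.
Qed.

End BinaryForms.

Lemma toQ_bform d (p : {poly int}) : toQ (bform d p) = bform d (map_poly intr p).
Proof.
rewrite /toQ /bform raddf_sum /=; apply: eq_bigr => k _.
by rewrite map_mpolyZ map_mpolyX coef_map.
Qed.

Lemma ev_bmon d k (a b : int) : ev 'X_[bmon d k] a b = a ^+ (d - k) * b ^+ k.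
Proof. by rewrite /ev mevalX big_ord_recr big_ord_recr big_ord0 /= mul1r !bmonE. Qed.

Lemma ev_bform d (p : {poly int}) a b :
  ev (bform d p) a b = \sum_(0 <= k < d.+1) p`_k * (a ^+ (d - k) * b ^+ k).
Proof.
rewrite big_mkord /ev /bform raddf_sum /=; apply: eq_bigr => k _.
by rewrite mevalZ -/(ev _ a b) ev_bmon.
Qed.

Lemma evM (P Q : zpoly2) a b : ev (P * Q) a b = ev P a b * ev Q a b.
Proof. exact: rmorphM. Qed.

Lemma evXn (P : zpoly2) n a b : ev (P ^+ n) a b = ev P a b ^+ n.
Proof. exact: rmorphXn. Qed.

Lemma dvdz_monomial_sub (M a b a1 b1 : int) i j : (M %| a - a1)%Z -> (M %| b - b1)%Z ->
  (M %| a ^+ i * b ^+ j - a1 ^+ i * b1 ^+ j)%Z.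
Proof.
move=> da db.
have -> : a ^+ i * b ^+ j - a1 ^+ i * b1 ^+ j =
  (a ^+ i - a1 ^+ i) * b ^+ j + a1 ^+ i * (b ^+ j - b1 ^+ j) by ring.
by apply: rpredD; [apply: dvdz_mulr | apply: dvdz_mull]; rewrite subrXX dvdz_mulr.
Qed.

Lemma dvdz_ev_sub (P : zpoly2) (M a b a1 b1 : int) : (M %| a - a1)%Z -> (M %| b - b1)%Z ->
  (M %| ev P a b - ev P a1 b1)%Z.
Proof.
move=> da db; rewrite /ev !mevalE -sumrB; apply: rpred_sum => mm _.
by rewrite -mulrBr dvdz_mull // !big_ord_recr !big_ord0 /= !mul1r; apply: dvdz_monomial_sub.
Qed.

Lemma dvdz_ev_congr (P : zpoly2) (M D a b a1 b1 : int) :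
  (M %| a - a1)%Z -> (M %| b - b1)%Z -> (D %| M)%Z -> (D %| ev P a1 b1)%Z -> (D %| ev P a b)%Z.
Proof.
move=> da db dDM dP1; rewrite -[ev P a b](subrK (ev P a1 b1)) rpredD //.
exact: dvdz_trans dDM (dvdz_ev_sub P da db).
Qed.

Lemma ev_dhomog0 (P : zpoly2) a b a1 b1 : P \is 0.-homog -> ev P a b = ev P a1 b1.
Proof. by move=> hP; rewrite -(bform_dehomog hP) !ev_bform !big_nat1. Qed.

Section SylvesterDeg.
Variable R : comNzRingType.
Implicit Types f g : {poly R}.

(* Unlike [Sylvester_mx], the degrees m and n are prescribed instead of being
   read off the sizes of f and g: this is [sylvester] for univariate inputs. *)
Definition Sylvester_mx_deg m n f g : 'M[R]_(n + m) :=
  col_mx (lin1_mx (poly_rV \o f \o* rVpoly)) (lin1_mx (poly_rV \o g \o* rVpoly)).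

Lemma Sylvester_mx_degE m n f g (i j : 'I_(n + m)) :
  Sylvester_mx_deg m n f g i j =
    if (i < n)%N then ('X^i * f)`_j else ('X^(i - n) * g)`_j.
Proof.
by rewrite mxE; case: splitP => k ->; rewrite !mxE /= rVpoly_delta ?addKn.
Qed.

Lemma mul_Sylvester_mx_deg m n f g (w : 'rV_(n + m)) :
  w *m Sylvester_mx_deg m n f g = poly_rV (rVpoly (lsubmx w) * f + rVpoly (rsubmx w) * g).
Proof. by rewrite -{1}[w]hsubmxK mul_row_col !mul_rV_lin1 /= linearD. Qed.

End SylvesterDeg.

Lemma map_Sylvester_mx_deg (R S : comNzRingType) (h : {rmorphism R -> S}) m n f g :
  map_mx h (Sylvester_mx_deg m n f g) = Sylvester_mx_deg m n (map_poly h f) (map_poly h g).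
Proof.
apply/matrixP => i j; rewrite mxE !Sylvester_mx_degE.
by case: ifP => _; rewrite !coefXnM; case: ifP => _; rewrite ?coef_map ?rmorph0.
Qed.

Lemma coprimep_comb_eq0 (K : fieldType) (f g u v : {poly K}) :
  coprimep f g -> (size v < size f)%N -> u * f + v * g = 0 -> u = 0 /\ v = 0.
Proof.
move=> cop_fg svf uv0.
have f_dvd_vg : (f %| v * g)%R.
  have -> : v * g = - (u * f) by apply/eqP; rewrite -addr_eq0 addrC uv0.
  by rewrite dvdpNr dvdp_mulIr.
have v0 : v = 0.
  apply/eqP; apply: contraTT svf => nz_v; rewrite -leqNgt dvdp_leq //.
  by rewrite -(Gauss_dvdpl _ cop_fg).
split=> //; move: uv0; rewrite v0 mul0r addr0 => /eqP.
rewrite mulf_eq0 => /orP[/eqP //|/eqP f0].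
by move: svf; rewrite v0 f0 size_poly0.
Qed.

Lemma det_Sylvester_mx_deg_neq0 (K : fieldType) m n (f g : {poly K}) :
  (size f <= m.+1)%N -> (size g <= n.+1)%N -> coprimep f g ->
  (f`_m != 0) || (g`_n != 0) -> \det (Sylvester_mx_deg m n f g) != 0.
Proof.
move=> sf sg cop_fg lead_fg; apply/det0P => -[w nz_w].
rewrite mul_Sylvester_mx_deg; set u := rVpoly _; set v := rVpoly _.
have [su sv] : (size u <= n)%N /\ (size v <= m)%N by split; apply: size_poly.
move/(congr1 rVpoly); rewrite linear0 poly_rV_K => [uv0|]; last first.
  rewrite (leq_trans (size_polyD _ _)) // geq_max.
  have sizeM_le a b c d : (a <= c -> b <= d.+1 -> (a + b).-1 <= c + d)%N by lia.
  rewrite !(leq_trans (size_polyMleq _ _)) //; last exact: sizeM_le.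
  by rewrite [(n + m)%N]addnC; exact: sizeM_le.
have coef_lt_size (h : {poly K}) k : h`_k != 0 -> (k < size h)%N.
  by rewrite ltnNge; apply: contra => /(nth_default 0) ->.
have [u0 v0] : u = 0 /\ v = 0.
  case/orP: lead_fg => /coef_lt_size lead_lt.
    exact: coprimep_comb_eq0 cop_fg (leq_ltn_trans sv lead_lt) uv0.
  rewrite coprimep_sym in cop_fg; rewrite addrC in uv0.
  by have [] := coprimep_comb_eq0 cop_fg (leq_ltn_trans su lead_lt) uv0.
move/eqP: nz_w; apply; rewrite -[w]hsubmxK -[lsubmx w]rVpolyK -[rsubmx w]rVpolyK.
by rewrite -/u -/v u0 v0 !linear0 row_mx0.
Qed.

Lemma sylvester_dehomogE F G m n :
  sylvester F G m n = Sylvester_mx_deg m n (dehomog F m) (dehomog G n).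
Proof.
apply/matrixP => i j; rewrite Sylvester_mx_degE mxE !coefXnM !coef_poly.
by repeat case: ifP => ?; try done; lia.
Qed.

Lemma dvdz_det_sylvester F G m n (a b d : int) :
  F \is m.-homog -> G \is n.-homog -> (0 < n + m)%N ->
  (d %| ev F a b)%Z -> (d %| ev G a b)%Z ->
  (d %| \det (sylvester F G m n) * a ^+ (n + m).-1)%Z /\
  (d %| \det (sylvester F G m n) * b ^+ (n + m).-1)%Z.
Proof.
move=> hF hG nm_gt0 dF dG; set S := sylvester F G m n; set N := (n + m).-1.
pose x : 'cV[int]_(n + m) := \col_j (a ^+ (N - j) * b ^+ j).
have ev_row c e (H : {mpoly int[2]}) i : H \is e.-homog -> (i <= c)%N -> N = (c + e)%N ->
    \sum_(j < n + m) ('X^i * dehomog H e)`_j * x j ord0 = ev 'X_[bmon c i] a b * ev H a b.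
  move=> hH ic Ndef; under eq_bigr do rewrite mxE.
  rewrite -(big_mkord xpredT (fun j => ('X^i * dehomog H e)`_j * (a ^+ (N - j) * b ^+ j))).
  rewrite -(prednK nm_gt0) -/N -ev_bform Ndef -bformM ?size_poly ?size_polyXn ?ltnS //.
  by rewrite bformXn // bform_dehomog // /ev rmorphM.
have dSx i : (d %| (S *m x) i ord0)%Z.
  rewrite /S sylvester_dehomogE mxE.
  have [lt_in|le_ni] := ltnP i n.
    under eq_bigr => j _ do rewrite Sylvester_mx_degE lt_in.
    by rewrite (ev_row n.-1 m) ?dvdz_mull //; lia.
  under eq_bigr => j _ do rewrite Sylvester_mx_degE ltnNge le_ni /=.
  by rewrite (ev_row m.-1 n) ?dvdz_mull //; move: (ltn_ord i); lia.
have dx j : (d %| \det S * x j ord0)%Z.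
  have adjE : \adj S *m (S *m x) = \det S *: x by rewrite mulmxA mul_adj_mx mul_scalar_mx.
  have := congr1 (fun M : 'cV_(n + m) => M j ord0) adjE; rewrite /= !mxE => <-.
  by apply: rpred_sum => i _; apply: dvdz_mull.
split.
  by have := dx (Ordinal nm_gt0); rewrite mxE /= subn0 expr0 mulr1.
have lt_N : (N < n + m)%N by rewrite prednK.
by have := dx (Ordinal lt_N); rewrite mxE /= subnn expr0 mul1r.
Qed.

Lemma msize_toQ (P : zpoly2) : msize (toQ P) = msize P.
Proof. by rewrite !msizeE; apply/perm_big/msupp_map_mpoly/intr_inj. Qed.

Lemma toQM (P Q : zpoly2) : toQ (P * Q) = toQ P * toQ Q.
Proof. exact: rmorphM. Qed.

(* [msize D <= 1] says that D is a constant. *)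
Definition qcoprime (F G : zpoly2) : Prop :=
  forall D : qpoly2, qdvd D (toQ F) -> qdvd D (toQ G) -> (msize D <= 1)%N.

Lemma is_gcd_qcoprime D F G : is_gcd (D * F) (D * G) D -> qcoprime F G.
Proof.
case=> _ maxD lcD _ E [Q1 eF] [Q2 eG].
have [->|nzE] := eqVneq E 0; first by rewrite mmeasure0.
have nzD : toQ D != 0.
  rewrite -msize_poly_eq0 msize_toQ msize_poly_eq0.
  by apply: contraTneq lcD => ->; rewrite mleadc0 ltxx.
have : qcommon (toQ D * E) (D * F) (D * G).
  by split; [exists Q1; rewrite toQM eF | exists Q2; rewrite toQM eG]; rewrite mulrA.
have sizeM_le a b : (0 < a -> (a + b).-1 <= a -> b <= 1)%N by lia.
move/maxD; rewrite msizeM // msize_toQ; apply: sizeM_le.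
by rewrite -msize_toQ lt0n msize_poly_eq0.
Qed.

Lemma qdvd_bformM e m (d q : {poly rat}) : (e <= m)%N ->
  (size d <= e.+1)%N -> (size q <= (m - e).+1)%N -> qdvd (bform e d) (bform m (d * q)).
Proof. by move=> em sd sq; exists (bform (m - e) q); rewrite bformM // subnKC. Qed.

Lemma qdvd_bform_dvdp e m (d p : {poly rat}) : size d = e.+1 -> (size p <= m.+1)%N ->
  (d %| p)%R -> qdvd (bform e d) (bform m p).
Proof.
move=> sd sp dvd_dp; have [->|nz_p] := eqVneq p 0; first by exists 0; rewrite linear0 mulr0.
have nz_d : d != 0 by rewrite -size_poly_eq0 sd.
have le_ep : (e.+1 <= size p)%N by rewrite -sd; exact: dvdp_leq.
have size_quo a b : (a = e.+1 -> b <= m.+1 -> b - a.-1 <= (m - e).+1)%N by lia.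
rewrite -(divpKC dvd_dp); apply: qdvd_bformM; rewrite ?sd ?size_divp //.
  by rewrite -ltnS (leq_trans le_ep).
exact: size_quo.
Qed.

Lemma qdvd_x_bform e (h : {poly rat}) :
  (size h <= e.+1)%N -> h`_e = 0 -> qdvd (bform 1 1) (bform e h).
Proof.
move=> she he; have {she he} she : (size h <= e)%N.
  apply/leq_sizeP => i; rewrite leq_eqVlt => /orP[/eqP <- //|lt_ei].
  exact/nth_default/(leq_trans she).
case: e she => [|e] she.
  by exists 0; move: she; rewrite leqn0 size_poly_eq0 => /eqP->; rewrite linear0 mulr0.
by rewrite -[h]mul1r; apply: qdvd_bformM; rewrite ?size_poly1 ?subn1.
Qed.

Lemma size_dehomog_int d (H : zpoly2) :
  (size (map_poly intr (dehomog H d) : {poly rat}) <= d.+1)%N.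
Proof. by rewrite size_rat_int_poly size_poly. Qed.

Lemma toQ_dehomog F m : F \is m.-homog -> toQ F = bform m (map_poly intr (dehomog F m)).
Proof. by move=> hF; rewrite -toQ_bform bform_dehomog. Qed.

Section CoprimeForms.
Variables (F G : zpoly2) (m n : nat).
Hypotheses (hF : F \is m.-homog) (hG : G \is n.-homog) (coFG : qcoprime F G).
Local Notation f := (map_poly intr (dehomog F m) : {poly rat}).
Local Notation g := (map_poly intr (dehomog G n) : {poly rat}).

Lemma qcoprime_dehomog_lead : (f`_m != 0) || (g`_n != 0).
Proof.
(* f`_m = g`_n = 0 would make x a common factor of F and G. *)
rewrite -negb_and; apply/negP => /andP[/eqP fm /eqP gn].
have := coFG (D := bform 1 1); rewrite (toQ_dehomog hF) (toQ_dehomog hG).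
move=> /(_ (qdvd_x_bform (size_dehomog_int _ _) fm) (qdvd_x_bform (size_dehomog_int _ _) gn)).
by apply/negP; rewrite -ltnNge (msize_bform (k := 0)) // coef1.
Qed.

Lemma qcoprime_dehomog_coprimep : coprimep f g.
Proof.
have nz_fg : (f != 0) || (g != 0).
  by case/orP: qcoprime_dehomog_lead => lead; apply/orP; [left|right];
    apply: contraNneq lead => ->; rewrite coef0.
rewrite coprimep_def eqn_leq lt0n size_poly_eq0 gcdp_eq0 negb_and nz_fg andbT.
rewrite leqNgt; apply/negP => gt1; set r := gcdp f g in gt1.
have sr : size r = (size r).-1.+1 by rewrite prednK // ltnW.
have := coFG (D := bform (size r).-1 r); rewrite (toQ_dehomog hF) (toQ_dehomog hG).
move=> /(_ (qdvd_bform_dvdp sr (size_dehomog_int _ _) (dvdp_gcdl f g))).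
move=> /(_ (qdvd_bform_dvdp sr (size_dehomog_int _ _) (dvdp_gcdr f g))).
apply/negP; rewrite -ltnNge; apply: leq_trans (msize_bform (leqnn _) _).
  by rewrite -sr.
by rewrite -lead_coefE lead_coef_eq0 -size_poly_gt0 ltnW.
Qed.

Lemma det_sylvester_neq0 : \det (sylvester F G m n) != 0.
Proof.
rewrite sylvester_dehomogE -(intr_eq0 rat) -det_map_mx map_Sylvester_mx_deg.
apply: det_Sylvester_mx_deg_neq0; rewrite ?size_dehomog_int //.
  exact: qcoprime_dehomog_coprimep.
exact: qcoprime_dehomog_lead.
Qed.

End CoprimeForms.

Section PAdic.
Variable p : nat.
Hypothesis p_pr : prime p.

Lemma pfactor_dvdz k (z : int) : z != 0 -> ((p ^ k)%N%:Z %| z)%Z = (k <= vp p z)%N.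
Proof. by move=> nz_z; rewrite dvdzE absz_nat pfactor_dvdn // absz_gt0. Qed.

Lemma vpM (x y : int) : x != 0 -> y != 0 -> vp p (x * y) = (vp p x + vp p y)%N.
Proof. by move=> nz_x nz_y; rewrite /vp abszM lognM // absz_gt0. Qed.

Lemma vpX (z : int) e : vp p (z ^+ e) = (e * vp p z)%N.
Proof. by rewrite /vp abszX lognX. Qed.

Lemma dvdz_pexp_exp t e (z : int) :
  ((p ^ t)%N%:Z %| z)%Z -> ((p ^ (t * e))%N%:Z %| z ^+ e)%Z.
Proof. by rewrite !dvdzE !absz_nat abszX expnM; apply: dvdn_exp2r. Qed.

Lemma dvdz_pexp_root t e (z : int) : (0 < e)%N ->
  ((p ^ (t * e))%N%:Z %| z ^+ e)%Z -> ((p ^ t)%N%:Z %| z)%Z.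
Proof.
move=> e_gt0; have [->|nz_z] := eqVneq z 0; first by rewrite dvdz0.
by rewrite !pfactor_dvdz ?expf_neq0 // vpX mulnC leq_pmul2l.
Qed.

Lemma dvdz_pexp_cofactor n r (x y : int) : x != 0 ->
  ((p ^ n)%N%:Z %| x ^+ r * y)%Z -> ((p ^ (n - r * vp p x))%N%:Z %| y)%Z.
Proof.
move=> nz_x; have [->|nz_y] := eqVneq y 0; first by rewrite dvdz0.
by rewrite !pfactor_dvdz ?mulf_neq0 ?expf_neq0 // vpM ?expf_neq0 // vpX; lia.
Qed.

Lemma dvdz_primitive s N (c a b : int) : gcdz (gcdz a b) p%:Z = 1 ->
  ((p ^ s)%N%:Z %| c * a ^+ N)%Z -> ((p ^ s)%N%:Z %| c * b ^+ N)%Z -> ((p ^ s)%N%:Z %| c)%Z.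
Proof.
move=> prim_ab; rewrite !dvdzE !absz_nat !abszM !abszX.
have coprime_pX z : ~~ (p %| `|z|)%N -> coprime (p ^ s) (`|z| ^ N).
  by move=> pNz; rewrite coprimeXl // coprimeXr // prime_coprime.
have : ~~ (p %| `|a|)%N || ~~ (p %| `|b|)%N.
  rewrite -negb_and; apply/negP => /andP[pa pb].
  have : (p%:Z %| gcdz (gcdz a b) p%:Z)%Z by rewrite !dvdz_gcd !dvdzE !absz_nat pa pb dvdnn.
  by rewrite prim_ab dvdz1 absz_nat => /eqP p1; move: p_pr; rewrite p1.
by case/orP => /coprime_pX cop; rewrite (Gauss_dvdl _ cop) // => _.
Qed.

End PAdic.

Lemma leq_ceil_div m r e : (0 < r)%N -> (ceil_div m r <= e)%N = (m <= e * r)%N.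
Proof. by move=> r_gt0; rewrite /ceil_div -ltnS ltn_divLR //; lia. Qed.

Lemma dhomog_factor (R : idomainType) n (P F : {mpoly R[n]}) d e :
  P != 0 -> P \is d.-homog -> P * F \is e.-homog -> F \is (e - d)%N.-homog.
Proof.
move=> nzP hP hPF; have F_sum := pihomog_partitionE (leqnn (msize F)).
rewrite F_sum; apply: rpred_sum => j _.
have [dj_e|dj_ne] := eqVneq (d + j)%N e; first by rewrite -dj_e addKn pihomogP.
suff -> : pihomog mdeg j F = 0 by rewrite rpred0.
(* Multiplication by P sends the j-th homogeneous component of F to the
   (d+j)-th one of P * F. *)
have : pihomog mdeg (d + j) (P * F) = P * pihomog mdeg j F.
  rewrite [in P * F]F_sum mulr_sumr raddf_sum /=.
  rewrite (bigD1 j) //= pihomog_dE ?dhomogM ?pihomogP // big1 ?addr0 // => i /eqP ij.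
  apply: pihomog_ne0 (dhomogM hP (pihomogP _ _ _)).
  by rewrite eqn_add2l; apply/eqP => /val_inj.
rewrite (pihomog_ne0 _ hPF) 1?eq_sym // => /esym/eqP.
by rewrite mulf_eq0 (negbTE nzP) => /eqP.
Qed.

Lemma dhomog_cofactor (D F : zpoly2) d e :
  D != 0 -> D \is d.-homog -> D * F \is e.-homog -> F \is (fdeg F).-homog.
Proof.
move=> nzD hD hDF; have [->|nzF] := eqVneq F 0; first exact: dhomog0.
exact: dhomog_msize (dhomog_factor nzD hD hDF).
Qed.

Section Transfer.
Variables (p r t nu : nat) (K F G : zpoly2) (a1 b1 a b : int).
Hypotheses (p_pr : prime p) (r_gt0 : (0 < r)%N).
Hypotheses (hF : F \is (fdeg F).-homog) (hG : G \is (fdeg G).-homog) (coFG : qcoprime F G).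
Hypotheses (ceil_le_nu : (ceil_div t r <= nu)%N) (vp_le_nu : (vp p (Res F G) <= nu)%N).
Hypothesis prim1 : gcdz (gcdz a1 b1) p%:Z = 1.
Hypotheses (ca : ((p ^ nu)%N%:Z %| a - a1)%Z) (cb : ((p ^ nu)%N%:Z %| b - b1)%Z).

Let dvdz_congr (P : zpoly2) s : (s <= nu)%N ->
  ((p ^ s)%N%:Z %| ev P a1 b1)%Z -> ((p ^ s)%N%:Z %| ev P a b)%Z.
Proof. by move=> s_le_nu; apply: dvdz_ev_congr ca cb _; rewrite dvdzE !absz_nat dvdn_exp2l. Qed.

Lemma dvdz_cofactors_congr s : ((p ^ s)%N%:Z %| ev F a1 b1)%Z -> ((p ^ s)%N%:Z %| ev G a1 b1)%Z ->
  ((p ^ s)%N%:Z %| ev F a b)%Z /\ ((p ^ s)%N%:Z %| ev G a b)%Z.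
Proof.
move=> dF1 dG1; have [deg0|deg_gt0] := posnP (fdeg G + fdeg F).
  move/eqP: deg0; rewrite addn_eq0 => /andP[/eqP G0 /eqP F0].
  have hF0 : F \is 0.-homog by move: hF; rewrite F0.
  have hG0 : G \is 0.-homog by move: hG; rewrite G0.
  by rewrite (ev_dhomog0 a b a1 b1 hF0) (ev_dhomog0 a b a1 b1 hG0).
have [dRa dRb] := dvdz_det_sylvester hF hG deg_gt0 dF1 dG1.
have nzR : Res F G != 0 by apply: det_sylvester_neq0.
have s_le_nu : (s <= nu)%N.
  by rewrite (leq_trans _ vp_le_nu) // -pfactor_dvdz // (dvdz_primitive p_pr prim1 dRa dRb).
by split; apply: dvdz_congr.
Qed.

Lemma dvdz_Kr_cofactors_congr :
  ((p ^ t)%N%:Z %| ev (K ^+ r * F) a1 b1)%Z -> ((p ^ t)%N%:Z %| ev (K ^+ r * G) a1 b1)%Z ->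
  ((p ^ t)%N%:Z %| ev (K ^+ r * F) a b)%Z /\ ((p ^ t)%N%:Z %| ev (K ^+ r * G) a b)%Z.
Proof.
rewrite !evM !evXn => dF1 dG1; set c := ceil_div t r.
have [dK1|ndK1] := boolP ((p ^ c)%N%:Z %| ev K a1 b1)%Z.
  have dKr : ((p ^ t)%N%:Z %| ev K a b ^+ r)%Z.
    apply: dvdz_trans (dvdz_pexp_exp r (dvdz_congr ceil_le_nu dK1)).
    by rewrite dvdzE !absz_nat dvdn_exp2l // -leq_ceil_div.
  by split; apply: dvdz_mulr.
have nzK1 : ev K a1 b1 != 0 by apply: contraNneq ndK1 => ->; rewrite dvdz0.
set e := vp p (ev K a1 b1).
have e_lt_c : (e < c)%N by rewrite ltnNge -pfactor_dvdz.
have dKe : ((p ^ (e * r))%N%:Z %| ev K a b ^+ r)%Z.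
  apply/dvdz_pexp_exp/dvdz_congr; first exact: leq_trans (ltnW e_lt_c) ceil_le_nu.
  by rewrite pfactor_dvdz.
have [dF dG] := dvdz_cofactors_congr (dvdz_pexp_cofactor p_pr nzK1 dF1)
  (dvdz_pexp_cofactor p_pr nzK1 dG1).
have split_t : (p ^ t)%N%:Z = (p ^ (e * r))%N%:Z * (p ^ (t - r * e))%N%:Z.
  rewrite -PoszM -expnD mulnC subnKC //.
  by move: e_lt_c; rewrite ltnNge leq_ceil_div // -ltnNge mulnC => /ltnW.
by rewrite split_t; split; apply: dvdz_mul.
Qed.

End Transfer.

Unset Implicit Arguments.

Theorem lemma4p6 (p k r : nat) (A B K F G : {mpoly int[2]}) :
  prime p -> (0 < k)%N -> (0 < r)%N ->
  homogeneous A -> homogeneous B -> homogeneous K ->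
  is_gcd (A ^+ 3) (B ^+ 2) (K ^+ r) ->
  A ^+ 3 = K ^+ r * F -> B ^+ 2 = K ^+ r * G ->
  let nu := maxn (ceil_div (12 * k) r) (vp p (Res F G)) in
  forall a1 b1 : int,
    inU p k A B a1 b1 -> gcdz (gcdz a1 b1) p%:Z = 1 ->
    forall a b : int,
      (a == a1 %[mod (p ^ nu)%N%:Z])%Z -> (b == b1 %[mod (p ^ nu)%N%:Z])%Z ->
      inU p k A B a b.
Proof.
move=> p_pr _ r_gt0 [dA hA] [dB hB] [dK hK] gcdK eA eB nu a1 b1 [dA1 dB1] prim1 a b.
rewrite !eqz_mod_dvd => ca cb.
have nzKr : K ^+ r != 0 by case: gcdK => _ _ + _; apply: contraTneq => ->; rewrite mleadc0 ltxx.
have hKr := dhomogMn r hK.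
have hF : F \is (fdeg F).-homog.
  by apply: (dhomog_cofactor nzKr hKr); rewrite -eA; exact: dhomogMn hA.
have hG : G \is (fdeg G).-homog.
  by apply: (dhomog_cofactor nzKr hKr); rewrite -eB; exact: dhomogMn hB.
have coFG : qcoprime F G by apply: (@is_gcd_qcoprime (K ^+ r)); rewrite -eA -eB.
have [t4 t6] : (12 * k = 4 * k * 3)%N /\ (12 * k = 6 * k * 2)%N by split; ring.
have dKF1 : ((p ^ (12 * k))%N%:Z %| ev (K ^+ r * F) a1 b1)%Z.
  by rewrite -eA evXn t4 dvdz_pexp_exp.
have dKG1 : ((p ^ (12 * k))%N%:Z %| ev (K ^+ r * G) a1 b1)%Z.
  by rewrite -eB evXn t6 dvdz_pexp_exp.
have [dKF dKG] := dvdz_Kr_cofactors_congr p_pr r_gt0 hF hG coFG (leq_maxl _ _) (leq_maxr _ _)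
  prim1 ca cb dKF1 dKG1.
split; [apply: (dvdz_pexp_root p_pr (e := 3)) | apply: (dvdz_pexp_root p_pr (e := 2))] => //.
  by rewrite -evXn eA -t4.
by rewrite -evXn eB -t6.
Qed.
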